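(* In the sleeping multi-armed bandit setting, let $(\ell_t)_{t\ge1}$ be i.i.d. random loss vectors in $[0,1]^K$ with mean vector $\mu$, where for each $t$, $\ell_t$ is independent of everything determined before the learner observes $\ell_t(k_t)$ at round $t$ (including $S_1,\dots,S_t$ and $k_1,\dots,k_t$), and let $(S_t)_{t\ge1}$ be any sequence of availability sets such that $S_t$ may depend only on $(\ell_s)_{s\le t-1}$ (and past play). Then for any algorithm, $$\max_{\pi}R_T^{\mathrm{policy}}(\pi)=\max_{\sigma}\mathbb E\big[R_T^{\mathrm{ordering}}(\sigma)\big],$$ where $\pi$ ranges over all policies and $\sigma$ over all orderings of $[K]$.
   Context: Sleeping multi-armed bandit setting: $K$ arms $[K]$. At each round $t$ a nonempty availability set $S_t\subseteq[K]$ is revealed, the learner (possibly randomized, using only $S_1,\dots,S_t$, previously observed losses and internal randomness) selects $k_t\in S_t$ and observes $\ell_t(k_t)$. An ordering is a permutation $\sigma=(\sigma_1,\dots,\sigma_K)$ of $[K]$; for nonempty $S\subseteq[K]$, $\sigma(S)=\sigma_m$ with $m=\min\{i:\sigma_i\in S\}$. Ordering regret: $R_T^{\mathrm{ordering}}(\sigma)=\sum_{t=1}^T\big(\ell_t(k_t)-\ell_t(\sigma(S_t))\big)$. A policy is a map $\pi$ from nonempty subsets of $[K]$ to $[K]$ with $\pi(S)\in S$. Policy regret: $R_T^{\mathrm{policy}}(\pi)=\mathbb E\big[\sum_{t=1}^T\ell_t(k_t)-\sum_{t=1}^T\ell_t(\pi(S_t))\big]$, the expectation being over availabilities, losses and the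 learner's randomness. *)

From HB Require Import structures.
From mathcomp Require Import all_boot all_order all_algebra all_fingroup.
From mathcomp Require Import all_classical all_reals all_analysis.
Set Implicit Arguments. Unset Strict Implicit. Unset Printing Implicit Defensive.
Import Order.TTheory GRing.Theory Num.Theory.
Local Open Scope classical_set_scope.
Local Open Scope ring_scope.

(* An ordering is a permutation sigma of 'I_K, read as the
   sequence (sigma 0, ..., sigma (K-1)).  [ord_sel sigma S d] is the first
   element of that sequence lying in S; the default d is only used when S is
   empty (never the case in the theorem, where d is the chosen arm k_t in S_t). *)
Definition ord_sel (K : nat) (sigma : {perm 'I_K}) (S : {set 'I_K}) (d : 'I_K)
  : 'I_K := nth d [seq sigma i | i <- enum 'I_K & sigma i \in S] 0.

Definition is_policy (K : nat) (pi : {ffun {set 'I_K} -> 'I_K}) : Prop :=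
  forall S : {set 'I_K}, S != finset.set0 -> pi S \in S.

Definition loss_event {d} {T : measurableType d} {R : realType} (K : nat)
  (loss : nat -> 'I_K -> T -> R) (t : nat) (C : 'I_K -> set R) : set T :=
  [set w | forall i, C i (loss t i w)].

Definition history_event {d} {T : measurableType d} {R : realType} (K : nat)
  (loss : nat -> 'I_K -> T -> R) (S : nat -> T -> {set 'I_K})
  (k : nat -> T -> 'I_K) (t : nat)
  (A : nat -> {set 'I_K}) (j : nat -> 'I_K) (B : nat -> 'I_K -> set R) : set T :=
  [set w | (forall s, (s <= t)%N -> S s w = A s /\ k s w = j s) /\
           (forall s, (s < t)%N -> forall i, B s i (loss s i w))].

Definition policy_regret {d} {T : measurableType d} {R : realType} (K : nat)
  (P : probability T R) (loss : nat -> 'I_K -> T -> R)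
  (S : nat -> T -> {set 'I_K}) (k : nat -> T -> 'I_K) (Tn : nat)
  (pi : {ffun {set 'I_K} -> 'I_K}) : \bar R :=
  'E_P[fun w => \sum_(t < Tn) loss t (k t w) w
                - \sum_(t < Tn) loss t (pi (S t w)) w].

Definition exp_ordering_regret {d} {T : measurableType d} {R : realType}
  (K : nat) (P : probability T R) (loss : nat -> 'I_K -> T -> R)
  (S : nat -> T -> {set 'I_K}) (k : nat -> T -> 'I_K) (Tn : nat)
  (sigma : {perm 'I_K}) : \bar R :=
  'E_P[fun w => \sum_(t < Tn)
                  (loss t (k t w) w - loss t (ord_sel sigma (S t w) (k t w)) w)].

From HB Require Import structures.
From mathcomp Require Import all_boot all_order all_algebra all_fingroup.
From mathcomp Require Import all_classical all_reals all_analysis.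

Set Implicit Arguments.
Unset Strict Implicit.
Unset Printing Implicit Defensive.
Import Order.TTheory GRing.Theory Num.Theory.
Local Open Scope classical_set_scope.
Local Open Scope ring_scope.

(* Since l_t is independent of S_t and distributed as l_1, the expected loss
   of a policy pi is sum_t sum_A P(S_t = A) mu(pi A), with mu the mean loss
   vector: it is minimised, hence the policy regret maximised, by choosing in
   every A an arm of least mean.  That choice is A |-> sigma(A) for an ordering
   sigma sorting the arms by mu, and the ordering regret of any sigma is the
   policy regret of A |-> sigma(A), so both maxima are attained there. *)

Section ordering_selection.
Variables (K : nat) (sigma : {perm 'I_K}).

Lemma ord_sel_seq_cons (A : {set 'I_K}) : A != finset.set0 ->
  exists x s, [seq sigma i | i <- enum 'I_K & sigma i \in A] = x :: s /\ x \in A.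
Proof.
move=> /set0Pn [a aA].
have : a \in [seq sigma i | i <- enum 'I_K & sigma i \in A].
  by rewrite -[a](permKV sigma) map_f // mem_filter permKV aA mem_enum.
case E : [seq sigma i | i <- enum 'I_K & sigma i \in A] => [//|x s] _.
exists x, s; split => //.
have : x \in [seq sigma i | i <- enum 'I_K & sigma i \in A] by rewrite E mem_head.
by case/mapP => i; rewrite mem_filter => /andP [? _] ->.
Qed.

Lemma ord_sel_default (A : {set 'I_K}) a b :
  A != finset.set0 -> ord_sel sigma A a = ord_sel sigma A b.
Proof. by case/ord_sel_seq_cons => x [s [E _]]; rewrite /ord_sel E. Qed.

Lemma ord_sel_in (A : {set 'I_K}) a : A != finset.set0 -> ord_sel sigma A a \in A.
Proof. by case/ord_sel_seq_cons => x [s [E xA]]; rewrite /ord_sel E. Qed.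

End ordering_selection.

Lemma exists_ord_sel_min K (le : rel 'I_K) : transitive le -> total le ->
  exists sigma : {perm 'I_K}, forall A a, A != finset.set0 ->
    forall i, i \in A -> le (ord_sel sigma A a) i.
Proof.
move=> le_tr le_total; set s := sort le (enum 'I_K).
have /tuple_permP [sigma s_sigma] : perm_eq s (ord_tuple K).
  by rewrite val_ord_tuple perm_sort.
have sE : s = map sigma (enum 'I_K).
  by rewrite s_sigma /=; apply: eq_map => i; exact: tnth_ord_tuple.
exists sigma => A a _ i iA.
have -> : ord_sel sigma A a = nth a [seq x <- s | x \in A] 0.
  by rewrite /ord_sel sE [in RHS]filter_map.
have : sorted le [seq x <- s | x \in A].
  by apply: sorted_filter => //; exact: sort_sorted.
have : i \in [seq x <- s | x \in A] by rewrite mem_filter iA mem_sort mem_enum.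
case: [seq x <- s | x \in A] => [//|x t] /= + x_path.
rewrite inE => /orP [/eqP ->|it]; first by case/orP: (le_total x x).
by move/allP: (order_path_min le_tr x_path) => /(_ i it).
Qed.

Section fibers.
Context d (T : measurableType d) (R : realType) (X : finType).
Variables (f : T -> X) (g : X -> T -> R).

Lemma fiber_sumE w : g (f w) w = \sum_(x : X) \1_[set w | f w = x] w * g x w.
Proof.
rewrite (bigD1 (f w)) //= indicE mem_set // mul1r big1 ?addr0 // => x xf.
by rewrite indicE memNset ?mul0r //= => /esym/eqP; rewrite (negbTE xf).
Qed.

Lemma measurable_fun_fiber :
  (forall x, measurable [set w | f w = x]) ->
  (forall x, measurable_fun setT (g x)) ->
  measurable_fun setT (fun w => g (f w) w).
Proof.
move=> mf mg; rewrite (funext fiber_sumE); apply: measurable_sum => x.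
exact: measurable_realfun.measurable_funM.
Qed.

End fibers.

Lemma probability_inhabited d (T : measurableType d) (R : realType)
  (P : probability T R) : inhabited T.
Proof.
have : [set: T] != set0.
  apply/eqP => T0; have := probability_setT P.
  by rewrite T0 measure0 => -[] /eqP; rewrite eq_sym oner_eq0.
by case/set0P => w _; constructor.
Qed.

Lemma sum_unit_interval_Lfun1 d (T : measurableType d) (R : realType)
  (P : probability T R) (F : nat -> T -> R) (n : nat) :
  (forall t, measurable_fun setT (F t)) -> (forall t w, 0 <= F t w <= 1) ->
  (fun w => \sum_(t < n) F t w) \in Lfun P 1.
Proof.
move=> mF F01; apply/Lfun1_integrable.
have mS : measurable_fun setT (fun w => \sum_(t < n) F t w) by exact: measurable_sum.
apply/integrableP; split; first exact/measurable_realfun.measurable_EFinP.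
apply: (le_lt_trans (integral_le_bound (n%:R)%:E _ _ _ _)) => //.
- exact/measurable_realfun.measurable_EFinP.
- apply: aeW => w _ /=; rewrite lee_fin ger0_norm; last first.
    by apply: sumr_ge0 => t _; case/andP: (F01 t w).
  rewrite -[n in n%:R]card_ord -sumr_const.
  by apply: ler_sum => t _; case/andP: (F01 t w).
- apply: lte_mul_pinfty => //.
  by apply: (le_lt_trans (probability_le1 P measurableT)); rewrite ltry.
Qed.

(* [X] extended by [-1] off [E] has [E] as preimage of [[0, +oo[], so the
   integral over [E] is one against its law, which the hypothesis identifies
   on [[0, +oo[] with [P E] times the law of [Y]. *)
Lemma integral_indicM_indep d (T : measurableType d) (R : realType)
  (P : probability T R) (E : set T) (X Y : T -> R) :
  measurable E -> measurable_fun setT X -> measurable_fun setT Y ->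
  (forall w, 0 <= X w) -> (forall w, 0 <= Y w) ->
  (forall C, measurable C -> P (X @^-1` C `&` E) = (P E * P (Y @^-1` C))%E) ->
  (\int[P]_w (\1_E w * X w)%:E = P E * \int[P]_w (Y w)%:E)%E.
Proof.
move=> mE mX mY X0 Y0 XY_indep.
pose Z w := \1_E w * (X w + 1) - 1.
have ZE w : Z w = if w \in E then X w else -1.
  by rewrite /Z indicE; case: (w \in E); rewrite ?mul1r ?mul0r ?addrK ?sub0r.
have mZ : measurable_fun setT Z.
  apply: measurable_realfun.measurable_funB; last exact: measurable_cst.
  apply: measurable_realfun.measurable_funM.
    exact: measurable_realfun.measurable_indic.
  by apply: measurable_realfun.measurable_funD => //; exact: measurable_cst.
pose D := `[0%R, +oo[%classic : set R.
have mD : measurable D by exact: measurable_itv.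
have DE y : D y <-> 0 <= y by rewrite /D /= in_itv /= andbT.
have ZD : Z @^-1` D = E.
  apply/seteqP; split => w /=; rewrite ZE.
    by case: ifPn => [/set_mem//|_]; rewrite DE ler0N1.
  by move=> wE; rewrite (mem_set wE) DE.
have PE_ge0 : 0 <= fine (P E) by exact: fine_ge0.
have PE : P E = (fine (P E))%:E by rewrite fineK // fin_num_measure.
transitivity (\int[P]_(w in E) (Z w)%:E)%E.
  rewrite [RHS]integral_mkcond; apply: eq_integral => w _.
  by rewrite /patch ZE indicE; case: (w \in E); rewrite /= ?mul1r ?mul0r.
transitivity (\int[pushforward P Z]_(y in D) y%:E)%E.
  rewrite ge0_integral_pushforward //; first by rewrite ZD.
  by move=> y /set_mem; rewrite DE lee_fin.
rewrite (eq_measure_integral (mscale (NngNum PE_ge0) (pushforward P Y))); last first.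
  move=> C mC CD.
  change (P (Z @^-1` C) = ((fine (P E))%:E * P (Y @^-1` C))%E).
  rewrite -PE -XY_indep //; congr (P _).
  apply/seteqP; split => w /=.
    by rewrite ZE; case: ifPn => [/set_mem wE XC|_ /CD]; [split|rewrite DE ler0N1].
  by case=> XC wE; rewrite ZE (mem_set wE).
rewrite ge0_integral_mscale //; last by move=> y; rewrite DE lee_fin.
change ((fine (P E))%:E * \int[pushforward P Y]_(y in D) y%:E
  = P E * \int[P]_w (Y w)%:E)%E.
rewrite -PE ge0_integral_pushforward //; last first.
  by move=> y /set_mem; rewrite DE lee_fin.
congr (_ * integral _ _ _)%E.
by apply/seteqP; split => w //= _; rewrite DE.
Qed.

Section stochastic_sleeping_bandit.
Context d (Omega : measurableType d) (R : realType) (P : probability Omega R).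
Variables (K : nat) (loss : nat -> 'I_K -> Omega -> R).
Variables (S : nat -> Omega -> {set 'I_K}) (k : nat -> Omega -> 'I_K).
Hypothesis loss_meas : forall t i, measurable_fun setT (loss t i).
Hypothesis loss_range : forall t i w, 0 <= loss t i w <= 1.
Hypothesis S_meas : forall t A, measurable [set w | S t w = A].
Hypothesis k_meas : forall t j, measurable [set w | k t w = j].
Hypothesis S_nonempty : forall t w, S t w != finset.set0.
Hypothesis loss_ident : forall t (C : 'I_K -> set R), (forall i, measurable (C i)) ->
  P (loss_event loss t C) = P (loss_event loss 0 C).
Hypothesis loss_indep : forall t (C : 'I_K -> set R) (A : nat -> {set 'I_K})
  (j : nat -> 'I_K) (B : nat -> 'I_K -> set R),
  (forall i, measurable (C i)) -> (forall s i, measurable (B s i)) ->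
  P (loss_event loss t C `&` history_event loss S k t A j B)
  = (P (loss_event loss t C) * P (history_event loss S k t A j B))%E.

Definition mean_loss (i : 'I_K) : \bar R := (\int[P]_w (loss 0 i w)%:E)%E.

Local Notation prefix t := {ffun 'I_t.+1 -> {set 'I_K} * 'I_K}.

(* [inord] is only ever consulted at [s <= t], where it is the identity. *)
Definition history_prefix (t : nat) (h : prefix t) : set Omega :=
  history_event loss S k t (fun s => (h (inord s)).1) (fun s => (h (inord s)).2)
    (fun _ _ => setT).

Lemma measurable_history_prefix t (h : prefix t) : measurable (history_prefix h).
Proof.
rewrite (_ : history_prefix h = \bigcap_(s in [set s | (s <= t)%N])
    ([set w | S s w = (h (inord s)).1] `&` [set w | k s w = (h (inord s)).2])).
  by apply: bigcap_measurableType => s _; exact: measurableI.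
apply/seteqP; split => w /=; first by case=> Hw _ s /Hw.
by move=> Hw; split => // s /Hw.
Qed.

Lemma history_prefixP t (h : prefix t) w :
  history_prefix h w <-> h = [ffun s : 'I_t.+1 => (S s w, k s w)].
Proof.
split => [[Hw _]|->]; last by split => // s st; rewrite ffunE /= inordK.
apply/ffunP => s; rewrite ffunE.
have [] := Hw s (ltn_ord s); rewrite inord_val.
by case: (h s) => /= _ _ <- <-.
Qed.

Lemma indic_avail_sum_prefix t A w :
  \1_[set w | S t w = A] w
  = \sum_(h : prefix t | (h ord_max).1 == A)
      \1_(history_prefix h) w :> R.
Proof.
pose hw : prefix t := [ffun s : 'I_t.+1 => (S s w, k s w)].
have hw_max : (hw ord_max).1 = S t w by rewrite ffunE.
have indic_prefix h : \1_(history_prefix h) w = (h == hw)%:R :> R.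
  rewrite indicE; congr (nat_of_bool _)%:R.
  apply/idP/eqP; first by move/set_mem/history_prefixP.
  by move=> ->; apply/mem_set/history_prefixP.
under eq_bigr do rewrite indic_prefix.
have [SA|SnA] := eqVneq (S t w) A.
  rewrite (bigD1 hw) ?hw_max ?SA //= eqxx big1 ?addr0.
    by rewrite indicE (mem_set (SA : [set w | S t w = A] w)).
  by move=> h /andP [_ /negbTE ->].
rewrite big1; first by rewrite indicE memNset //=; exact/eqP.
move=> h; case: (eqVneq h hw) => [->|_ _] //.
by rewrite hw_max (negbTE SnA).
Qed.

(* [{S_t = A}] is the disjoint union of the prefix histories ending with [A];
   these are the events against which [loss_indep] applies. *)
Lemma measureI_avail_sum_prefix t A (G : set Omega) : measurable G ->
  P (G `&` [set w | S t w = A])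
  = (\sum_(h : prefix t | (h ord_max).1 == A)
       P (G `&` history_prefix h))%E.
Proof.
move=> mG.
have mGh (h : prefix t) :
    measurable (G `&` history_prefix h).
  by apply: measurableI => //; exact: measurable_history_prefix.
transitivity (\int[P]_w (\1_(G `&` [set w | S t w = A]) w)%:E)%E.
  by rewrite integral_indic ?setIT //; apply: measurableI.
under eq_integral do
  rewrite indicI /= indic_avail_sum_prefix mulr_sumr -sumEFin -big_filter.
rewrite ge0_integral_sum //; last first.
  move=> h; apply/measurable_realfun.measurable_EFinP.
  apply: measurable_realfun.measurable_funM;
    apply: measurable_realfun.measurable_indic => //.
  exact: measurable_history_prefix.
rewrite big_filter; apply: eq_bigr => h _.
by rewrite -(setIT (G `&` _)) -integral_indic // indicI.
Qed.

Lemma measure_loss_avail_indep t A i (C : set R) : measurable C ->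
  P (loss t i @^-1` C `&` [set w | S t w = A])
  = (P [set w | S t w = A] * P (loss 0 i @^-1` C))%E.
Proof.
move=> mC; pose Ci i' := if i' == i then C else setT.
have mCi i' : measurable (Ci i') by rewrite /Ci; case: ifP.
have loss_eventE t' : loss_event loss t' Ci = loss t' i @^-1` C.
  apply/seteqP; split => w /=; first by move/(_ i); rewrite /Ci eqxx.
  by move=> Cw i'; rewrite /Ci; case: ifP => [/eqP ->|].
have mlossC : measurable (loss t i @^-1` C).
  by rewrite -[X in measurable X]setTI; exact: loss_meas.
rewrite measureI_avail_sum_prefix // -[in RHS](setTI [set w | _]).
rewrite measureI_avail_sum_prefix // muleC ge0_sume_distrr; last first.
  by move=> h _; apply: measure_ge0; rewrite setTI; exact: measurable_history_prefix.
apply: eq_bigr => h _.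
by rewrite setTI -loss_eventE loss_indep // loss_ident // loss_eventE.
Qed.

Lemma integral_indic_avail_loss t A i :
  (\int[P]_w (\1_[set w | S t w = A] w * loss t i w)%:E
   = P [set w | S t w = A] * mean_loss i)%E.
Proof.
apply: integral_indicM_indep => //.
- by move=> w; case/andP: (loss_range t i w).
- by move=> w; case/andP: (loss_range 0 i w).
- by move=> C mC; exact: measure_loss_avail_indep.
Qed.

Lemma integral_policy_loss Tn (pi : {set 'I_K} -> 'I_K) :
  (\int[P]_w (\sum_(t < Tn) loss t (pi (S t w)) w)%:E
   = \sum_(t < Tn) \sum_(A : {set 'I_K}) P [set w | S t w = A] * mean_loss (pi A))%E.
Proof.
have indic_loss_ge0 t A w : 0 <= \1_[set w | S t w = A] w * loss t (pi A) w.
  by rewrite mulr_ge0 //; case/andP: (loss_range t (pi A) w).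
have measurable_indic_loss t A :
    measurable_fun setT (fun w => \1_[set w | S t w = A] w * loss t (pi A) w).
  apply: measurable_realfun.measurable_funM; last exact: loss_meas.
  exact: measurable_realfun.measurable_indic.
transitivity (\int[P]_w (\sum_(t < Tn) \sum_(A : {set 'I_K})
    (\1_[set w | S t w = A] w * loss t (pi A) w)%:E))%E.
  apply: eq_integral => w _; rewrite -sumEFin; apply: eq_bigr => t _.
  by rewrite sumEFin -(fiber_sumE (S t) (fun A => loss t (pi A))).
rewrite ge0_integral_sum //; last 2 first.
- move=> t; apply: emeasurable_sum => A.
  exact/measurable_realfun.measurable_EFinP.
- by move=> t w _; apply: sume_ge0 => A _; rewrite lee_fin.
apply: eq_bigr => t _; rewrite ge0_integral_sum //; last 2 first.
- by move=> A; exact/measurable_realfun.measurable_EFinP.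
- by move=> A w _; rewrite lee_fin.
by apply: eq_bigr => A _; exact: integral_indic_avail_loss.
Qed.

Lemma selected_loss_sum_Lfun1 Tn (X : finType) (f : nat -> Omega -> X)
  (a : nat -> X -> 'I_K) : (forall t x, measurable [set w | f t w = x]) ->
  (fun w => \sum_(t < Tn) loss t (a t (f t w)) w) \in Lfun P 1.
Proof.
move=> f_meas.
apply: (@sum_unit_interval_Lfun1 _ _ _ P (fun t w => loss t (a t (f t w)) w))
  => [t|t w].
  exact: (measurable_fun_fiber (f_meas t) (fun x => loss_meas t (a t x))).
exact: loss_range.
Qed.

Lemma policy_regretE Tn (pi : {ffun {set 'I_K} -> 'I_K}) :
  policy_regret P loss S k Tn pi
  = ('E_P[fun w => (\sum_(t < Tn) loss t (k t w) w)%R]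
     - \sum_(t < Tn) \sum_(A : {set 'I_K})
         P [set w | S t w = A] * mean_loss (pi A))%E.
Proof.
rewrite /policy_regret expectationB.
- by rewrite [in X in (_ - X)%E]expectation.unlock integral_policy_loss.
- exact: (selected_loss_sum_Lfun1 _ (fun _ j => j) k_meas).
- exact: (selected_loss_sum_Lfun1 _ (fun _ => pi) S_meas).
Qed.

Lemma exp_ordering_regretE Tn (sigma : {perm 'I_K}) a :
  exp_ordering_regret P loss S k Tn sigma
  = policy_regret P loss S k Tn [ffun A => ord_sel sigma A a].
Proof.
rewrite /exp_ordering_regret /policy_regret; congr (expectation P _).
apply/funext => w; rewrite sumrB; congr (_ - _); apply: eq_bigr => t _.
by rewrite ffunE (ord_sel_default sigma (k t w) a (S_nonempty t w)).
Qed.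

Lemma policy_regret_le_ord_sel Tn (sigma : {perm 'I_K}) a
  (pi : {ffun {set 'I_K} -> 'I_K}) :
  (forall A b, A != finset.set0 ->
     forall i, i \in A -> (mean_loss (ord_sel sigma A b) <= mean_loss i)%E) ->
  is_policy pi ->
  (policy_regret P loss S k Tn pi
   <= policy_regret P loss S k Tn [ffun A => ord_sel sigma A a])%E.
Proof.
move=> sigma_min pi_policy; rewrite !policy_regretE leeB //.
apply: lee_sum => t _; apply: lee_sum => A _.
have [->|A0] := eqVneq A finset.set0.
  rewrite (_ : [set w | S t w = finset.set0] = set0) ?measure0 ?mul0e //.
  by apply/seteqP; split => w //= /eqP; rewrite (negbTE (S_nonempty t w)).
by rewrite lee_wpmul2l // ffunE sigma_min // pi_policy.
Qed.

End stochastic_sleeping_bandit.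

Theorem mainTheorem7 (d : measure_display) (Omega : measurableType d)
  (R : realType) (P : probability Omega R) (K : nat)
  (loss : nat -> 'I_K -> Omega -> R)
  (S : nat -> Omega -> {set 'I_K}) (k : nat -> Omega -> 'I_K) (Tn : nat)
  (* losses are random variables with values in [0,1] *)
  (loss_meas : forall t i, measurable_fun setT (loss t i))
  (loss_range : forall t i w, 0 <= loss t i w <= 1)
  (* availability sets and chosen arms are random variables *)
  (S_meas : forall t A, measurable [set w | S t w = A])
  (k_meas : forall t j, measurable [set w | k t w = j])
  (S_nonempty : forall t w, S t w != finset.set0)
  (k_avail : forall t w, k t w \in S t w)
  (* the loss vectors are identically distributed *)
  (loss_ident : forall t (C : 'I_K -> set R), (forall i, measurable (C i)) ->
     P (loss_event loss t C) = P (loss_event loss 0 C))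
  (* l_t is independent of everything determined before l_t(k_t) is observed *)
  (loss_indep : forall t (C : 'I_K -> set R) (A : nat -> {set 'I_K})
     (j : nat -> 'I_K) (B : nat -> 'I_K -> set R),
     (forall i, measurable (C i)) -> (forall s i, measurable (B s i)) ->
     P (loss_event loss t C `&` history_event loss S k t A j B)
     = (P (loss_event loss t C) * P (history_event loss S k t A j B))%E) :
  \big[maxe/-oo%E]_(pi : {ffun {set 'I_K} -> 'I_K} | `[< is_policy pi >])
      policy_regret P loss S k Tn pi
  = \big[maxe/-oo%E]_(sigma : {perm 'I_K})
      exp_ordering_regret P loss S k Tn sigma.
Proof.
have [w0] := probability_inhabited P; pose a := k 0 w0.
pose mu := mean_loss P loss.
have [sigma sigma_min] := @exists_ord_sel_min K (fun i j => mu i <= mu j)%E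
  (fun i j l => @le_trans _ _ (mu i) (mu j) (mu l))
  (fun i j => le_total (mu i) (mu j)).
have ordering_regretE tau := exp_ordering_regretE P loss k S_nonempty Tn tau a.
apply/eqP; rewrite eq_le; apply/andP; split.
  apply: bigmax_le => [|pi /asboolP pi_policy]; first exact: leNye.
  apply: (le_trans (policy_regret_le_ord_sel loss_meas loss_range S_meas k_meas
    S_nonempty loss_ident loss_indep Tn a sigma_min pi_policy)).
  by rewrite -ordering_regretE; exact: le_bigmax.
apply: bigmax_le => [|tau _]; first exact: leNye.
rewrite ordering_regretE; apply: le_bigmax_cond; apply/asboolP => A A0.
by rewrite ffunE ord_sel_in.
Qed.
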